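(* For a finite set $\mathcal{D}$ and $n\ge1$, let $p(n,\mathcal{D})$ be the number of degenerate $n$-ary relations on $\mathcal{D}$ divided by the number $2^{|\mathcal{D}|^n}$ of all $n$-ary relations on $\mathcal{D}$. Then $p(n,\mathcal{D})\to0$ when $|\mathcal{D}|\ge2$ is fixed and $n\to\infty$, and also when $n\ge2$ is fixed and $|\mathcal{D}|\to\infty$.
   Context: An $n$-ary relation on $\mathcal{D}$ is a subset $R\subseteq\mathcal{D}^{\{1,\dots,n\}}$. $R$ is degenerate if there is a partition $\{1,\dots,n\}=\Lambda_1\cup\dots\cup\Lambda_m$ with $m>1$ and all $\Lambda_i\ne\emptyset$ and relations $R^{\Lambda_i}\subseteq\mathcal{D}^{\Lambda_i}$ such that $R=\{a: a|_{\Lambda_i}\in R^{\Lambda_i}\ \forall i\}$. *)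

From HB Require Import structures.
From mathcomp Require Import all_boot all_order all_algebra.
From mathcomp Require Import all_classical all_reals all_analysis.
Set Implicit Arguments. Unset Strict Implicit. Unset Printing Implicit Defensive.
Import Order.TTheory GRing.Theory Num.Theory.

Definition tup (D : finType) (n : nat) := {ffun 'I_n -> D}.
Definition relation (D : finType) (n : nat) := {set tup D n}.

Definition subtup (D : finType) (n : nat) (L : {set 'I_n}) :=
  {ffun {i : 'I_n | i \in L} -> D}.

Definition restr (D : finType) (n : nat) (L : {set 'I_n}) (a : tup D n)
  : subtup D L := [ffun i => a (val i)].

(* R is degenerate: there is a partition of {1..n} into m > 1 nonempty blocks
   and relations R^Λ ⊆ D^Λ on the blocks with R = {a | a|_Λ ∈ R^Λ for all Λ}.
   (mathcomp's [partition] excludes the empty block.) *)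
Definition degenerate (D : finType) (n : nat) (R : relation D n) : Prop :=
  exists P : {set {set 'I_n}},
    finset.partition P [set: 'I_n] /\ 1 < #|P| /\
    exists RL : forall L : {set 'I_n}, {set subtup D L},
      forall a : tup D n,
        a \in R <-> (forall L, L \in P -> restr L a \in RL L).

Definition num_degenerate (D : finType) (n : nat) : nat :=
  #|[set R : relation D n | `[< degenerate R >]]|.

Definition pdeg (R : realType) (D : finType) (n : nat) : R :=
  (num_degenerate D n)%:R / (2 ^ (#|D| ^ n))%:R.

(* If R is degenerate and L is any block of its partition, then R is the
   product of a relation on D^L and a relation on D^(~L), where L is nonempty
   and proper.  There are fewer than 2^n such L and, by convexity of
   k |-> d^k (d = |D|), at most 2^(d^|L| + d^(n-|L|)) <= 2^(d + d^(n-1))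
   products for each.  Hence p(n, D) <= 2^(n + d + d^(n-1) - d^n), and the
   exponent tends to -oo both as n grows and as d grows. *)
From HB Require Import structures.
From mathcomp Require Import all_boot all_order all_algebra.
From mathcomp Require Import all_classical all_reals all_analysis.
From mathcomp Require Import zify.
Import Order.TTheory GRing.Theory Num.Theory numFieldNormedType.Exports.
Set Implicit Arguments. Unset Strict Implicit. Unset Printing Implicit Defensive.

Lemma card_finset (T : finType) : #|{set T}| = 2 ^ #|T|.
Proof.
rewrite -cardsT -card_powerset; apply: eq_card => A.
by rewrite !inE finset.subsetT.
Qed.

Lemma leq_card_bigcup (I T : finType) (P : pred I) (F : I -> {set T}) :
  #|\bigcup_(i | P i) F i| <= \sum_(i | P i) #|F i|.
Proof.
elim/big_rec2: _ => [|i n U _ le_U_n]; first by rewrite cards0.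
by apply: leq_trans (leq_card_setU _ _) _; rewrite leq_add2l.
Qed.

Lemma leq_add_expn (d k j : nat) : 0 < k -> 0 < j ->
  d ^ k + d ^ j <= d + d ^ (k + j).-1.
Proof.
case: k j => [|k] [|j] // _ _.
rewrite addSn /= addnS !expnS expnD -[X in _ <= X + _]muln1 -!mulnDr leq_mul2l.
have [-> //|d_gt0] := posnP d.
have dk_gt0 : 0 < d ^ k by rewrite expn_gt0 d_gt0.
have dj_gt0 : 0 < d ^ j by rewrite expn_gt0 d_gt0.
apply/orP; right; nia.
Qed.

Lemma exponent_gap_arity (d n : nat) : 2 <= d -> 5 <= n ->
  n + (d + d ^ n.-1) + n <= d ^ n.
Proof.
move=> d_ge2 n_ge5; have {n_ge5}[p ->] : exists p, n = p.+4.+1.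
  by exists (n - 5); lia.
rewrite /= [d ^ p.+4.+1]expnS [d ^ p.+4]expnS.
have : 8 * p.+1 <= d ^ p.+3.
  have two_pow_le : 2 ^ p.+3 <= d ^ p.+3 by rewrite leq_exp2r.
  apply: leq_trans two_pow_le.
  by rewrite !expnS !mulnA leq_mul2l /= ltn_expl.
move: (d ^ p.+3) => Z Z_ge; nia.
Qed.

Lemma exponent_gap_domain (d n : nat) : 2 <= n -> n + 4 <= d ->
  n + (d + d ^ n.-1) + d <= d ^ n.
Proof.
move=> n_ge2; have {n_ge2}[p ->] : exists p, n = p.+2 by exists (n - 2); lia.
move=> d_ge; rewrite /= [d ^ p.+2]expnS.
have : d <= d ^ p.+1 by rewrite -{1}(expn1 d) leq_pexp2l //; lia.
move: (d ^ p.+1) => Y Y_ge; nia.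
Qed.

Section DegenerateRelations.

Variables (D : finType) (n : nat).

Lemma card_subtup (L : {set 'I_n}) : #|subtup D L| = #|D| ^ #|L|.
Proof. by rewrite card_ffun card_sig; congr (_ ^ _); apply: eq_card. Qed.

Lemma restr_subset (L1 L2 : {set 'I_n}) (a b : tup D n) :
  L2 \subset L1 -> restr L1 a = restr L1 b -> restr L2 a = restr L2 b.
Proof.
move=> /fintype.subsetP sub_L21 eq_ab; apply/ffunP => -[i iL2]; rewrite !ffunE /=.
have := congr1 (fun f : subtup D L1 => f (exist _ i (sub_L21 i iL2))) eq_ab.
by rewrite !ffunE.
Qed.

Definition prod_rel (L : {set 'I_n})
    (S1 : {set subtup D L}) (S2 : {set subtup D (~: L)}) : relation D n :=
  [set a | (restr L a \in S1) && (restr (~: L) a \in S2)].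
Arguments prod_rel : clear implicits.

Definition prod_rels (L : {set 'I_n}) : {set relation D n} :=
  [set prod_rel L S.1 S.2 | S in [set: {set subtup D L} * {set subtup D (~: L)}]].

Definition proper_block (L : {set 'I_n}) := (L != finset.set0) && (L != [set: 'I_n]).

Lemma degenerate_prod_rel (R : relation D n) : degenerate R ->
  exists2 L, proper_block L & exists S1 S2, R = prod_rel L S1 S2.
Proof.
move=> [P [/and3P[_ trivP set0_notin_P] [P_gt1 [RL R_eq]]]].
have [L LP] : exists L, L \in P by apply/set0Pn; rewrite -card_gt0 ltnW.
have sub_compl L2 : L2 \in P -> L2 != L -> L2 \subset ~: L.
  move=> L2P neq; rewrite -finset.disjoints_subset.
  by move/finset.trivIsetP: trivP; apply.
have [L' L'P L'_neq] : exists2 L', L' \in P & L' != L.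
  move: P_gt1; rewrite (cardsD1 L) LP ltnS card_gt0 => /set0Pn[L'].
  by rewrite !inE => /andP[]; exists L'.
exists L.
  apply/andP; split; first by apply: contraNneq set0_notin_P => <-.
  apply: contraNneq set0_notin_P => L_full.
  have := sub_compl _ L'P L'_neq.
  by rewrite L_full finset.setCT finset.subset0 => /eqP <-.
exists (RL L), [set restr (~: L) b | b in R].
apply/finset.setP => a; rewrite inE; apply/idP/andP => [aR|[aL /imsetP[b bR ab]]].
  by split; [exact: (proj1 (R_eq a) aR) | apply/imsetP; exists a].
apply/(R_eq a) => L2 L2P; have [-> //|neq] := eqVneq L2 L.
by rewrite (restr_subset (sub_compl _ L2P neq) ab); apply: (proj1 (R_eq b)).
Qed.

Lemma card_prod_rels (L : {set 'I_n}) : proper_block L ->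
  #|prod_rels L| <= 2 ^ (#|D| + #|D| ^ n.-1).
Proof.
move=> /andP[L_neq0 L_neqT]; apply: leq_trans (leq_imset_card _ _) _.
rewrite cardsT card_prod !card_finset !card_subtup -expnD leq_exp2l //.
apply: leq_trans (leq_add_expn _ _ _) _; last by rewrite cardsC card_ord.
  by rewrite card_gt0.
by rewrite card_gt0 -finset.setCT (inj_eq (@finset.setC_inj _)).
Qed.

Lemma num_degenerate_le :
  num_degenerate D n <= 2 ^ (n + (#|D| + #|D| ^ n.-1)).
Proof.
have deg_sub : [set R : relation D n | `[< degenerate R >]]
    \subset \bigcup_(L | proper_block L) prod_rels L.
  apply/fintype.subsetP => R; rewrite inE => /asboolP.
  move=> /degenerate_prod_rel[L L_proper [S1 [S2 ->]]]; apply/bigcupP; exists L => //.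
  by apply/imsetP; exists (S1, S2); rewrite ?inE.
apply: leq_trans (subset_leq_card deg_sub) _.
apply: leq_trans (leq_card_bigcup _ _) _.
apply: (@leq_trans (\sum_(L : {set 'I_n}) 2 ^ (#|D| + #|D| ^ n.-1))).
  rewrite big_mkcond /=; apply: leq_sum => L _.
  by case: ifP => // /card_prod_rels.
by rewrite sum_nat_const card_finset card_ord -expnD.
Qed.

Local Open Scope ring_scope.

Lemma pdeg_le_inv (R : realType) (M : nat) :
  (n + (#|D| + #|D| ^ n.-1) + M <= #|D| ^ n)%N -> `|pdeg R D n| <= M.+1%:R^-1.
Proof.
move=> gap.
have total_gt0 : (0 : R) < (2 ^ (#|D| ^ n))%:R by rewrite ltr0n expn_gt0.
rewrite /pdeg ger0_norm ?divr_ge0 ?ler0n // ler_pdivrMr // mulrC.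
rewrite ler_pdivlMr ?ltr0n // -natrM ler_nat.
apply: leq_trans (leq_mul num_degenerate_le (ltn_expl M (isT : (1 < 2)%N))) _.
by rewrite -expnD leq_exp2l.
Qed.

End DegenerateRelations.

Local Open Scope classical_set_scope.
Local Open Scope ring_scope.

Theorem theorem6 (R : realType) :
  (forall D : finType, (2 <= #|D|)%N ->
     (fun n : nat => pdeg R D n) @ \oo --> (0 : R^o)) /\
  (forall n : nat, (2 <= n)%N ->
     forall eps : R, 0 < eps ->
       exists N : nat, forall D : finType, (N <= #|D|)%N ->
         `|pdeg R D n| < eps).
Proof.
split=> [D D_ge2 | n n_ge2 eps eps_gt0].
  apply/cvgr0Pnorm_lt => eps eps_gt0.
  have [K _ inv_lt] := near_infty_natSinv_lt (PosNum eps_gt0).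
  exists (maxn K 5) => // m /=; rewrite geq_max => /andP[Km m_ge5].
  apply: le_lt_trans (pdeg_le_inv R (exponent_gap_arity D_ge2 m_ge5)) _.
  exact: inv_lt.
have [K _ inv_lt] := near_infty_natSinv_lt (PosNum eps_gt0).
exists (maxn K (n + 4)) => D; rewrite geq_max => /andP[KD D_ge].
apply: le_lt_trans (pdeg_le_inv R (exponent_gap_domain n_ge2 D_ge)) _.
exact: inv_lt.
Qed.
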